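(* For every base $\mathscr{B}$ and IPL formula $\varphi$: $\Vdash_{\mathscr{B}}\varphi$ if and only if for every base $\mathscr{X}\supseteq\mathscr{B}$ and every atom $p$, if $\varphi\Vdash_{\mathscr{X}}p$ then $\Vdash_{\mathscr{X}}p$.
   Context: Fix a denumerable set $\mathbb{A}$ of atoms. IPL formulas are built from atoms and $\bot$ using $\wedge,\vee,\to$. An atomic rule has the form $(Q_1\triangleright q_1,\dots,Q_n\triangleright q_n)\Rightarrow q$ with $n\ge 0$, $q,q_i\in\mathbb{A}$, $Q_i$ finite sets of atoms; a base is a set of atomic rules. Derivability $\vdash_{\mathscr{B}}$ is the least relation with $S\cup\{q\}\vdash_{\mathscr{B}} q$, and if $(Q_1\triangleright q_1,\dots,Q_n\triangleright q_n)\Rightarrow q\in\mathscr{B}$ and $S\cup Q_i\vdash_{\mathscr{B}} q_i$ for all $i$ then $S\vdash_{\mathscr{B}} q$. Sandqvist's support $\Vdash_{\mathscr{B}}$: $\Vdash_{\mathscr{B}}p$ iff $\emptyset\vdash_{\mathscr{B}}p$; $\Vdash_{\mathscr{B}}\varphi\to\psi$ iff $\varphi\Vdash_{\mathscr{B}}\psi$; $\Vdash_{\mathscr{B}}\varphi\wedge\psi$ iff $\Vdash_{\mathscr{B}}\varphi$ and $\Vdash_{\mathscr{B}}\psi$; $\Vdash_{\mathscr{B}}\varphi\vee\psi$ iff for all $\mathscr{C}\supseteq\mathscr{B}$ and atoms $p$, if $\varphi\Vdash_{\mathscr{C}}p$ and $\psi\Vdash_{\mathscr{C}}p$ then $\Vdash_{\mathscr{C}}p$;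 $\Vdash_{\mathscr{B}}\bot$ iff $\Vdash_{\mathscr{B}}p$ for all atoms $p$; for nonempty finite $\Gamma$, $\Gamma\Vdash_{\mathscr{B}}\varphi$ iff for every $\mathscr{C}\supseteq\mathscr{B}$, if $\Vdash_{\mathscr{C}}\psi$ for all $\psi\in\Gamma$ then $\Vdash_{\mathscr{C}}\varphi$. *)

From Stdlib Require Import List.
Import ListNotations.

Definition atom := nat.

Inductive form : Type :=
| Atom : atom -> form
| Bot : form
| And : form -> form -> form
| Or : form -> form -> form
| Imp : form -> form -> form.

(* Atomic rule (Q_1 |> q_1, ..., Q_n |> q_n) => q ; the finite sets Q_i are lists. *)
Record rule : Type := mkRule {
  premises : list (list atom * atom);
  concl : atom
}.

Definition base := rule -> Prop.

Definition base_incl (B C : base) : Prop := forall r, B r -> C r.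

(* Derivability S |-_B q, with S a finite set of atoms (list); S u Q is S ++ Q. *)
Inductive deriv (B : base) : list atom -> atom -> Prop :=
| deriv_ref : forall S q, In q S -> deriv B S q
| deriv_rule : forall S r, B r ->
    (forall Qq, In Qq (premises r) -> deriv B (S ++ fst Qq) (snd Qq)) ->
    deriv B S (concl r).

Fixpoint supp (B : base) (phi : form) : Prop :=
  match phi with
  | Atom p => deriv B [] p
  | Bot => forall p, deriv B [] p
  | And a b => supp B a /\ supp B b
  | Or a b => forall C, base_incl B C -> forall p : atom,
      (forall D, base_incl C D -> supp D a -> deriv D [] p) ->
      (forall D, base_incl C D -> supp D b -> deriv D [] p) ->
      deriv C [] p
  | Imp a b => forall C, base_incl B C -> supp C a -> supp C b
  end.

Definition supp_ctx (B : base) (G : list form) (phi : form) : Prop :=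
  match G with
  | [] => supp B phi
  | _ => forall C, base_incl B C -> (forall psi, In psi G -> supp C psi) -> supp C phi
  end.

(* The forward direction
   of the corollary is then immediate: in an extension of B, phi is still
   supported, so the hypothesis phi |-_X p discharges to |-_X p.  The
   backward direction is proved by induction on phi, for the semantic
   condition [atomically_supported] below (which unfolds the single-premise
   consequence phi |-_X p); the disjunction case mirrors Sandqvist's clause
   for "or", and the implication case uses that the condition is preserved
   under base extension together with monotonicity of support. *)

From Stdlib Require Import List.
Import ListNotations.

Lemma base_incl_refl (B : base) : base_incl B B.
Proof. unfold base_incl; auto. Qed.

Lemma base_incl_trans (A B C : base) :
  base_incl A B -> base_incl B C -> base_incl A C.
Proof. unfold base_incl; auto. Qed.

Lemma deriv_mono (B C : base) (S : list atom) (q : atom) :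
  base_incl B C -> deriv B S q -> deriv C S q.
Proof.
  intros HBC Hder; induction Hder as [S q Hin | S r Hr _ IH].
  - now apply deriv_ref.
  - apply deriv_rule; auto.
Qed.

Lemma supp_mono (phi : form) :
  forall B C, base_incl B C -> supp B phi -> supp C phi.
Proof.
  induction phi as [q | | a IHa b IHb | a IHa b IHb | a IHa b IHb];
    simpl; intros B C HBC Hsupp.
  - eapply deriv_mono; eauto.
  - intros p; eapply deriv_mono; eauto.
  - destruct Hsupp; split; eauto.
  - intros D HCD; apply Hsupp; eapply base_incl_trans; eauto.
  - intros D HCD; apply Hsupp; eapply base_incl_trans; eauto.
Qed.

Lemma supp_ctx_single (X : base) (phi : form) (p : atom) :
  supp_ctx X [phi] (Atom p) <->
  (forall C, base_incl X C -> supp C phi -> deriv C [] p).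
Proof.
  simpl; split.
  - intros H C HXC Hphi; apply H; [exact HXC |].
    intros psi [<- | []]; exact Hphi.
  - intros H C HXC Hall; apply H; [exact HXC |].
    apply Hall; now left.
Qed.

Definition atomically_supported (B : base) (phi : form) : Prop :=
  forall X : base, base_incl B X -> forall p : atom,
    (forall C, base_incl X C -> supp C phi -> deriv C [] p) -> deriv X [] p.

Lemma atomically_supported_mono (B C : base) (phi : form) :
  base_incl B C -> atomically_supported B phi -> atomically_supported C phi.
Proof.
  intros HBC H X HCX; apply H; eapply base_incl_trans; eauto.
Qed.

(* Support implies atomic support: phi persists into every extension. *)
Lemma supp_atomically_supported (B : base) (phi : form) :
  supp B phi -> atomically_supported B phi.
Proof.
  intros Hphi X HBX p Hcons.
  apply Hcons; [apply base_incl_refl | eapply supp_mono; eauto].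
Qed.

Lemma atomically_supported_supp (phi : form) :
  forall B, atomically_supported B phi -> supp B phi.
Proof.
  induction phi as [q | | a IHa b IHb | a IHa b IHb | a IHa b IHb];
    simpl; intros B H.
  - apply (H B (base_incl_refl B)); intros C _ Hq; exact Hq.
  - intros p; apply (H B (base_incl_refl B)); intros C _ Hbot; exact (Hbot p).
  -
    split; [apply IHa | apply IHb]; intros X HX p Hcons;
      apply H; auto; intros C HC [Ha Hb]; auto.
  - (* a consequence of both disjuncts is a consequence of the disjunction *)
    intros C HBC p Ha Hb; apply H; auto.
    intros D HCD Hor; apply Hor; [apply base_incl_refl | |];
      intros E HDE HE; [apply Ha | apply Hb]; eauto using base_incl_trans.
  - (* given a in C, the conclusion b is atomically supported in C *)
    intros C HBC Ha; apply IHb.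
    intros X HCX p Hcons.
    apply (atomically_supported_mono B C _ HBC H X HCX).
    intros D HXD Himp; apply Hcons; auto.
    apply Himp; [apply base_incl_refl |].
    eapply supp_mono; [| exact Ha]; eapply base_incl_trans; eauto.
Qed.

Theorem corollary1 (B : base) (phi : form) :
  supp B phi <->
  (forall X : base, base_incl B X -> forall p : atom,
     supp_ctx X [phi] (Atom p) -> supp X (Atom p)).
Proof.
  split.
  - intros Hphi X HBX p Hcons.
    exact (supp_atomically_supported B phi Hphi X HBX p
             (proj1 (supp_ctx_single X phi p) Hcons)).
  - intros H; apply atomically_supported_supp.
    intros X HBX p Hcons.
    exact (H X HBX p (proj2 (supp_ctx_single X phi p) Hcons)).
Qed.
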